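(* Let $k\ge 1$ and $l\geq 1$ be integers and $n=2^k$. Then for every $1\leq s\leq 2^k$, $a_{l2^{k-1},s}+a_{l2^{k-1},s-2^{k-1}}\equiv 0\pmod{2^l}$.
   Context: Let $D:\mathbb{Z}^n\to\mathbb{Z}^n$, $D(x_1,\dots,x_n)=(x_1+x_2,x_2+x_3,\dots,x_n+x_1)$. For integers $r\ge 0$ and $1\le s\le n$, define the integers $a_{r,s}$ by $D^r(0,0,\dots,0,1)=(a_{r,n},a_{r,n-1},\dots,a_{r,1})$; equivalently, $a_{r,s}$ is the coefficient of $x_s$ in the first coordinate of $D^r(x_1,\dots,x_n)$. The second index is read modulo $n$ (representatives $1,\dots,n$). *)

From HB Require Import structures.
From mathcomp Require Import all_boot all_order all_algebra.
Set Implicit Arguments. Unset Strict Implicit. Unset Printing Implicit Defensive.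
Import Order.TTheory GRing.Theory Num.Theory.
Local Open Scope ring_scope.

(* Vectors in Z^n are represented as functions nat -> int, with 0-based
   coordinates: coordinate i (0 <= i < n) is x_{i+1}.  All indices are
   read modulo n. *)

Definition Dop (n : nat) (x : nat -> int) : nat -> int :=
  fun i => x (i %% n)%N + x (i.+1 %% n)%N.

Definition evec (n j : nat) : nat -> int :=
  fun i => if (i %% n == j)%N then 1 else 0.

(* a_{r,s} = coefficient of x_s in the first coordinate of D^r(x);
   since D^r is linear this is the first coordinate of D^r(e_s).
   The index s is an integer read modulo n (representatives 1..n),
   i.e. 0-based coordinate (s-1) mod n. *)
Definition acoef (n r : nat) (s : int) : int :=
  iter r (Dop n) (evec n `|((s - 1) %% (n%:Z))%Z|%N) 0%N.

From mathcomp Require Import all_boot all_order all_algebra.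
From mathcomp Require Import ring.

Set Implicit Arguments.
Unset Strict Implicit.
Unset Printing Implicit Defensive.
Import Order.TTheory GRing.Theory Num.Theory.
Local Open Scope ring_scope.

(* Modulo 2, [D^(2^a)] is [x |-> x + shift^(2^a) x] (Frobenius on [1 + shift]).
   Hence on a vector [x] of period [m = 2^a] mod [n], [D^m x] is [2 x] mod 2,
   and since [D] preserves such periodicity and is linear, every block of [m]
   further steps gains one more factor 2: [2^l] divides [D^(l m) x].  For
   [n = 2m], the columns [s] and [s - m] of [D^(l m)] add up to the first
   coordinate of [D^(l m) (e_s + e_(s-m))], and [e_s + e_(s-m)] has period [m]. *)

Section Dop.

Variable n : nat.

Lemma iter_DopS r x i :
  iter r.+1 (Dop n) x i = iter r (Dop n) x (i %% n)%N + iter r (Dop n) x (i.+1 %% n)%N.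
Proof. by []. Qed.

Lemma iter_Dop_add r x y i :
  iter r (Dop n) (fun j => x j + y j) i = iter r (Dop n) x i + iter r (Dop n) y i.
Proof. by elim: r i => [|r IH] i //; rewrite !iter_DopS !IH; ring. Qed.

Lemma iter_Dop_scale c x y : (forall j, y j = c * x j) ->
  forall r i, iter r (Dop n) y i = c * iter r (Dop n) x i.
Proof. by move=> Ey; elim=> [|r IH] i //=; rewrite /Dop !IH mulrDr. Qed.

Lemma iter_Dop_pow2_mod2 a x i :
  (2 %| iter (2 ^ a) (Dop n) x i - (x (i %% n)%N + x ((i + 2 ^ a) %% n)%N))%Z.
Proof.
elim: a x i => [|a IH] x i; first by rewrite /= /Dop addn1 subrr dvdz0.
rewrite expnS mul2n -addnn iterD.
have Hy := IH (iter (2 ^ a) (Dop n) x) i.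
have Hx0 := IH x (i %% n)%N.
have Hx1 := IH x ((i + 2 ^ a) %% n)%N.
rewrite modn_mod modnDml in Hx0; rewrite modn_mod modnDml -addnA in Hx1.
move: Hy Hx0 Hx1; set y := iter _ (Dop n) x; set u := iter _ (Dop n) y i.
set x0 := x _; set x1 := x _; set x2 := x _; set y0 := y _; set y1 := y _.
move=> Hy Hx0 Hx1; clearbody u x0 x1 x2 y0 y1.
have -> : u - (x0 + x2) = (u - (y0 + y1)) + (y0 - (x0 + x1)) + (y1 - (x1 + x2)) + x1 * 2
  by ring.
apply: rpredD; last exact/dvdz_mull/dvdzz.
by apply: rpredD; first apply: rpredD.
Qed.

Definition periodic (m : nat) (x : nat -> int) :=
  forall j, x (j %% n)%N = x ((j + m) %% n)%N.

Lemma periodic_Dop m x : periodic m x -> periodic m (Dop n x).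
Proof.
move=> Px j; rewrite /Dop !modn_mod.
have succ_mod k : ((k %% n).+1 %% n = k.+1 %% n)%N by rewrite -addn1 modnDml addn1.
by rewrite !succ_mod -addSn (Px j) (Px j.+1).
Qed.

Lemma periodic_iter_Dop m r x : periodic m x -> periodic m (iter r (Dop n) x).
Proof. by move=> Px; elim: r => [|r IH] //=; apply: periodic_Dop. Qed.

Lemma dvd_iter_Dop_periodic a l x : periodic (2 ^ a) x ->
  forall i, ((2 ^ l)%:Z %| iter (l * 2 ^ a) (Dop n) x i)%Z.
Proof.
set m := (2 ^ a)%N.
elim: l x => [|l IH] x Px i; first by rewrite expn0 dvd1z.
rewrite mulSn iterD.
set y := iter (l * m) (Dop n) x.
have Py : periodic m y by apply: periodic_iter_Dop.
pose z j := (y j %/ (2 ^ l)%:Z)%Z.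
have Ey j : y j = (2 ^ l)%:Z * z j by rewrite mulrC divzK //; apply: IH.
have Pz : periodic m z by move=> j; rewrite /z Py.
rewrite (iter_Dop_scale Ey) expnSr PoszM dvdz_mul //.
have Hz := iter_Dop_pow2_mod2 a z i.
rewrite -/m -Pz in Hz.
rewrite -(subrK (z (i %% n)%N + z (i %% n)%N) (iter m (Dop n) z i)) rpredD //.
by rewrite -mulr2n -mulr_natr dvdz_mull.
Qed.

End Dop.

Lemma acoefDn n r s : acoef n r (s + n%:Z) = acoef n r s.
Proof. by rewrite /acoef addrAC modzDr. Qed.

Lemma acoef_nat n r t :
  acoef n r t.+1%:Z = iter r (Dop n) (evec n (t %% n)%N) 0.
Proof. by rewrite /acoef -addn1 PoszD addrK modz_nat. Qed.

Lemma periodic_evec_pair m t :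
  periodic (m + m) m (fun j => evec (m + m) (t %% (m + m)) j
                              + evec (m + m) ((t + m) %% (m + m)) j).
Proof.
move=> j; rewrite /evec !modn_mod eqn_modDr.
have -> : (j + m == t %[mod m + m])%N = (j == t + m %[mod m + m])%N.
  by rewrite -(eqn_modDr m) -addnA modnDr.
by rewrite addrC.
Qed.

Theorem lemma4p6 (k l s : nat) :
  (1 <= k)%N -> (1 <= l)%N -> (1 <= s <= 2 ^ k)%N ->
  ((2 ^ l)%:Z %| acoef (2 ^ k) (l * 2 ^ k.-1) s%:Z
                 + acoef (2 ^ k) (l * 2 ^ k.-1) (s%:Z - (2 ^ k.-1)%:Z))%Z.
Proof.
case: k => [|a] // _ _; case: s => [|t] // _ /=.
set m := (2 ^ a)%N.
have -> : (2 ^ a.+1 = m + m)%N by rewrite expnS mul2n addnn.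
rewrite -(acoefDn _ _ (_ - _)).
have -> : t.+1%:Z - m%:Z + (m + m)%N%:Z = (t + m).+1%:Z by rewrite !PoszD; ring.
rewrite !acoef_nat -iter_Dop_add.
exact/dvd_iter_Dop_periodic/periodic_evec_pair.
Qed.
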